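(* For every $n\geq 1$, in the field $\mathbb{Q}(t)$, $$B_{n+1}(t)=A_n(t)B_n(t)-B_{n-1}(t),\qquad\text{where } A_n(t)=t^{-\mu(n)}\left(2\,\frac{t^{\mu(n)}-1}{t-1}+t\right).$$
   Context: The Stern polynomials $B_n(t)\in\mathbb{Z}[t]$ are defined by $B_0(t)=0$, $B_1(t)=1$, and for $n\geq 1$: $B_{2n}(t)=tB_n(t)$, $B_{2n+1}(t)=B_n(t)+B_{n+1}(t)$. For $n\geq 1$, $\mu(n)$ denotes the exponent of the highest power of $2$ dividing $n$. Note $\frac{t^{m}-1}{t-1}=1+t+\dots+t^{m-1}$ (equal to $0$ for $m=0$). *)

From HB Require Import structures.
From mathcomp Require Import all_boot all_order all_algebra.
Set Implicit Arguments. Unset Strict Implicit. Unset Printing Implicit Defensive.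
Import Order.TTheory GRing.Theory Num.Theory.
Local Open Scope ring_scope.

(* Stern polynomials B_n(t) in Z[t], computed with fuel k (k > n suffices). *)
Fixpoint stern_aux (k n : nat) : {poly int} :=
  match k with
  | 0 => 0
  | k'.+1 =>
    if n is 0 then 0 else
    if n == 1%N then 1 else
    if odd n then stern_aux k' n./2 + stern_aux k' (n./2).+1
    else 'X * stern_aux k' n./2
  end.

Definition stern (n : nat) : {poly int} := stern_aux n.+1 n.

Definition mu (n : nat) : nat := logn 2 n.

Definition Qt := {fraction {poly rat}}.
Definition toQt (p : {poly int}) : Qt := tofrac (map_poly intr p).
Definition tQ : Qt := toQt 'X.

From HB Require Import structures.
From mathcomp Require Import all_boot all_order all_algebra zify ring.
Import GRing.Theory.
Local Open Scope ring_scope.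

(* Cleared of denominators, the recurrence is the identity in Z[t]
   t^mu(n+1) (B_(n+2) + B_n) = (2 (1 + t + ... + t^(mu(n+1)-1)) + t) B_(n+1),
   proved by strong induction on n.  If n+1 is odd then mu = 0 and both sides
   are t (B_k + B_(k+1)) for n = 2k.  If n+1 = 2(k+1) then B_(n+2) + B_n =
   (B_(k+2) + B_k) + 2 B_(k+1) and B_(n+1) = t B_(k+1), while mu goes up by one,
   so the identity for k gives the one for n.  Dividing by t^mu in Q(t) and
   summing the geometric series yields the theorem. *)

Lemma stern_aux_fuel k1 k2 n :
  (n < k1)%N -> (n < k2)%N -> stern_aux k1 n = stern_aux k2 n.
Proof.
elim: k1 k2 n => [|k1 IH] [|k2] [|n] //= lt_n_k1 lt_n_k2.
by case: ifP => // n_neq1; case: ifP => n_odd; rewrite !(IH k2) //; lia.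
Qed.

Lemma stern_aux_double k n : (0 < n)%N -> stern_aux k.+1 n.*2 = 'X * stern_aux k n.
Proof. by case: n => // n _; rewrite doubleS /= negbK odd_double doubleK. Qed.

Lemma stern_aux_doubleS k n :
  (0 < n)%N -> stern_aux k.+1 n.*2.+1 = stern_aux k n + stern_aux k n.+1.
Proof. by case: n => // n _; rewrite /= odd_double uphalf_double. Qed.

Lemma stern_double k : stern k.*2 = 'X * stern k.
Proof.
case: k => [|k]; first by rewrite /stern /= mulr0.
by rewrite /stern stern_aux_double // (stern_aux_fuel _ k.+2) //; lia.
Qed.

Lemma stern_doubleS k : stern k.*2.+1 = stern k + stern k.+1.
Proof.
case: k => [|k]; first by rewrite /stern /= add0r.
rewrite /stern stern_aux_doubleS //.
by rewrite (stern_aux_fuel _ k.+2) ?(stern_aux_fuel _ k.+3) //; lia.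
Qed.

Lemma mu_doubleS k : mu k.*2.+1 = 0%N.
Proof. by rewrite /mu lognE dvdn2 /= odd_double. Qed.

Lemma mu_double k : (0 < k)%N -> mu k.*2 = (mu k).+1.
Proof. by move=> k_gt0; rewrite /mu -mul2n lognM // logn_prime. Qed.

Lemma stern_mu_recurrence n :
  'X^(mu n.+1) * (stern n.+2 + stern n)
  = (2 * \sum_(i < mu n.+1) 'X^i + 'X) * stern n.+1.
Proof.
elim/ltn_ind: n => n; rewrite -(odd_double_half n).
move: (odd n) (n./2) => [] k IH.
- rewrite add1n -doubleS !stern_doubleS stern_double mu_double //.
  have IHk := IH k ltac:(lia).
  set m := mu k.+1 in IHk *; set b := stern k.+1 in IHk *.
  set c := stern k.+2 in IHk *; set d := stern k in IHk *.
  rewrite big_ord_recr /= exprS.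
  have -> : 'X * 'X^m * (b + c + (d + b))
            = 'X * ('X^m * (c + d)) + 2 * ('X * 'X^m) * b by ring.
  by rewrite IHk; ring.
- rewrite add0n -doubleS stern_double stern_doubleS mu_doubleS big_ord0.
  by rewrite stern_double; ring.
Qed.

Lemma geometric_sum (F : fieldType) (x : F) m :
  x != 1 -> (x ^+ m - 1) / (x - 1) = \sum_(i < m) x ^+ i.
Proof. by move=> x_neq1; rewrite subrX1 mulrC mulKf // subr_eq0. Qed.

HB.instance Definition _ := GRing.RMorphism.copy toQt (@tofrac _ \o map_poly intr).

Lemma tQ_neq0 : tQ != 0.
Proof. by rewrite tofrac_eq0 map_polyX polyX_eq0. Qed.

Lemma tQ_neq1 : tQ != 1.
Proof. by rewrite -tofrac1 tofrac_eq map_polyX -polyC1 -subr_eq0 polyXsubC_eq0. Qed.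

Theorem mainTheorem12 (n : nat) (hn : (1 <= n)%N) :
  toQt (stern n.+1) =
  (tQ ^- mu n * (2 * ((tQ ^+ mu n - 1) / (tQ - 1)) + tQ)) * toQt (stern n)
  - toQt (stern n.-1).
Proof.
case: n hn => // n _; rewrite succnK.
have := congr1 toQt (stern_mu_recurrence n).
rewrite !(rmorphM, rmorphD, rmorphXn, rmorph_sum, rmorph1).
under eq_bigr do rewrite rmorphXn.
move=> rec; rewrite geometric_sum ?tQ_neq1 // -mulrA -rec.
by rewrite mulKf ?addrK // expf_neq0 // tQ_neq0.
Qed.
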